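(* Let $K\ge1$, fix $t_1,t_2\in\mathbb C$, and let $M\in\mathcal M$. If $D(M)<2K^2-3K$ then $\det M=0$. If $D(M)=2K^2-3K$ and $\det M\ne0$, then the column degrees $D_1(M),\dots,D_{2K}(M)$ are, in some order, exactly the distinct values $-1,0,1,\dots,2K-2$.
   Context: For integers $r$ and nonnegative integers $E,G$ define \[ I(r,E,G)=\frac{1}{2\pi i}\oint_{|u|=2}\frac{u^r\exp\left(\frac{t_1}{u-1}+\frac{t_2}{u+1}\right)}{(u-1)^E(u+1)^G}\,du \] (positively oriented circle). Let $\mathcal M=\mathcal M_{2K}$ be the set of $2K\times 2K$ matrices $M=(M_{i,j})$ with $M_{i,j}=I(c_j+r_i,E_j,G_j)$, where $r_1,\dots,r_{2K},c_1,\dots,c_{2K}\in\mathbb Z$ and $E_j,G_j$ are nonnegative integers. The degree of the entry $M_{i,j}$ is $d_{i,j}=c_j+r_i-E_j-G_j$, the degree of column $J$ is $D_J(M)=\max_i d_{i,J}$, and the total degree is $D(M)=\sum_{J=1}^{2K}D_J(M)$. *)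

From Stdlib Require Import Reals ZArith ClassicalEpsilon.
From mathcomp Require Import all_boot all_fingroup.
Set Implicit Arguments. Unset Strict Implicit. Unset Printing Implicit Defensive.
Local Open Scope R_scope.

Definition Cplx : Type := (R * R)%type.
Definition C0 : Cplx := (0, 0).
Definition C1 : Cplx := (1, 0).
Definition RtoC (x : R) : Cplx := (x, 0).
Definition Cadd (z w : Cplx) : Cplx := (fst z + fst w, snd z + snd w).
Definition Copp (z : Cplx) : Cplx := (- fst z, - snd z).
Definition Csub (z w : Cplx) : Cplx := Cadd z (Copp w).
Definition Cmul (z w : Cplx) : Cplx :=
  (fst z * fst w - snd z * snd w, fst z * snd w + snd z * fst w).
Definition Cinv (z : Cplx) : Cplx :=
  (fst z / (fst z * fst z + snd z * snd z),
   - snd z / (fst z * fst z + snd z * snd z)).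
Definition Cdiv (z w : Cplx) : Cplx := Cmul z (Cinv w).
Definition Cexp (z : Cplx) : Cplx := (exp (fst z) * cos (snd z), exp (fst z) * sin (snd z)).
Fixpoint Cpown (z : Cplx) (n : nat) : Cplx :=
  match n with O => C1 | S m => Cmul z (Cpown z m) end.
Definition Cpowz (z : Cplx) (r : Z) : Cplx :=
  match r with
  | Z0 => C1
  | Zpos p => Cpown z (Pos.to_nat p)
  | Zneg p => Cinv (Cpown z (Pos.to_nat p))
  end.

Definition integrand (t1 t2 : Cplx) (r : Z) (E G : nat) (u : Cplx) : Cplx :=
  Cdiv (Cmul (Cpowz u r)
             (Cexp (Cadd (Cdiv t1 (Csub u C1)) (Cdiv t2 (Cadd u C1)))))
       (Cmul (Cpown (Csub u C1) E) (Cpown (Cadd u C1) G)).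

(* Value of the Riemann integral of f over [a,b] (0 if not integrable;
   the functions used below are continuous, hence integrable). *)
Definition RInt (f : R -> R) (a b : R) : R :=
  epsilon (inhabits R0)
    (fun v : R => exists pr : Riemann_integrable f a b, RiemannInt pr = v).

(* Contour integral (1/(2 pi i)) \oint_{|u|=2} f(u) du, with the positively
   oriented parametrization u(th) = 2 e^{i th}, th in [0, 2 pi], du = i u dth,
   so that it equals (1/(2 pi)) \int_0^{2pi} f(u(th)) u(th) dth. *)
Definition circ (th : R) : Cplx := (2 * cos th, 2 * sin th).
Definition contour_int2 (f : Cplx -> Cplx) : Cplx :=
  let g := fun th => Cmul (f (circ th)) (circ th) in
  (RInt (fun th => fst (g th)) 0 (2 * PI) / (2 * PI),
   RInt (fun th => snd (g th)) 0 (2 * PI) / (2 * PI)).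

Definition Iint (t1 t2 : Cplx) (r : Z) (E G : nat) : Cplx :=
  contour_int2 (integrand t1 t2 r E G).

Definition Cdet (n : nat) (A : 'I_n -> 'I_n -> Cplx) : Cplx :=
  \big[Cadd/C0]_(s : 'S_n)
     Cmul (if odd_perm s then Copp C1 else C1) (\big[Cmul/C1]_(i < n) A i (s i)).

Definition entry_deg (n : nat) (r c : 'I_n -> Z) (E G : 'I_n -> nat)
  (i j : 'I_n) : Z := (c j + r i - Z.of_nat (E j) - Z.of_nat (G j))%Z.

(* D_J(M) = max_i d_{i,J}  (n >= 1 in our use; value 0 for n = 0). *)
Definition col_deg (n : nat) (r c : 'I_n -> Z) (E G : 'I_n -> nat) (j : 'I_n) : Z :=
  match enum 'I_n with
  | [::] => 0%Z
  | i0 :: _ => \big[Z.max/entry_deg r c E G i0 j]_(i < n) entry_deg r c E G i j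
  end.

Definition tot_deg (n : nat) (r c : 'I_n -> Z) (E G : 'I_n -> nat) : Z :=
  \big[Z.add/0%Z]_(j < n) col_deg r c E G j.

(* The contour integral [I(r, E, G)] vanishes as soon as its degree
   [r - E - G] is at most [-2]: the integrand is holomorphic outside the unit
   disk, so its integral over the circle of radius [rho] does not depend on
   [rho], while it is [O(1/rho)].
   Let [r_max] be the largest row parameter.  Entry [(i, j)] has degree
   [D_j - (r_max - r_i)], hence vanishes when [D_j < r_max - r_i - 1].  If
   [det M <> 0], the rows are distinct, so the [b_i := r_max - r_i] are
   distinct naturals, and some permutation [s] has all [M_(i, s i) <> 0],
   whence [D_(s i) >= b_i - 1].  Summing, [D(M) >= 0 + 1 + ... + (2K - 1) - 2K
   = 2K^2 - 3K], and equality forces [{b_i} = {0, ..., 2K - 1}] and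
   [D_(s i) = b_i - 1]. *)

From Pilot Require Import Defs.
From HB Require Import structures.
From Stdlib Require Import Reals ZArith Lra Lia Psatz.
From Stdlib Require Import ClassicalEpsilon FunctionalExtensionality Classical.
From Coquelicot Require Import Hierarchy Continuity Derive RInt ElemFct RInt_analysis.
From mathcomp Require Import all_boot all_fingroup.
Set Implicit Arguments. Unset Strict Implicit. Unset Printing Implicit Defensive.
Set Bullet Behavior "Strict Subproofs".

Open Scope R_scope.

Lemma Cplx_eq (z w : Cplx) : fst z = fst w -> snd z = snd w -> z = w.
Proof. by case: z => a b; case: w => c d /= -> ->. Qed.

Ltac Cring :=
  apply: Cplx_eq; rewrite /Cmul /Cadd /Copp /Csub /C0 /Defs.C1 /=; ring.

Definition Cnorm2 (z : Cplx) : R := fst z * fst z + snd z * snd z.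

Lemma Cnorm2_ge0 z : 0 <= Cnorm2 z.
Proof. rewrite /Cnorm2; nra. Qed.

Lemma Cnorm2_eq0 z : Cnorm2 z = 0 -> z = C0.
Proof. rewrite /Cnorm2 => H; apply: Cplx_eq; simpl; nra. Qed.

Lemma Cnorm2_neq0 z : z <> C0 -> Cnorm2 z <> 0.
Proof. by move=> Hz /Cnorm2_eq0. Qed.

Lemma Cnorm2_mul z w : Cnorm2 (Cmul z w) = Cnorm2 z * Cnorm2 w.
Proof. rewrite /Cnorm2 /Cmul /=; ring. Qed.

Lemma Cnorm2_inv z : Cnorm2 z <> 0 -> Cnorm2 (Cinv z) = / Cnorm2 z.
Proof. rewrite /Cnorm2 /Cinv /= => H; field; exact: H. Qed.

Lemma Cnorm2_exp z : Cnorm2 (Cexp z) = exp (fst z) * exp (fst z).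
Proof.
rewrite /Cnorm2 /Cexp /=; have := sin2_cos2 (snd z); rewrite /Rsqr => E.
transitivity (exp (fst z) * exp (fst z) *
  (sin (snd z) * sin (snd z) + cos (snd z) * cos (snd z))); first ring.
by rewrite E Rmult_1_r.
Qed.

Lemma Cnorm2_pown z n : Cnorm2 (Cpown z n) = Cnorm2 z ^ n.
Proof.
elim: n => [|n IH] /=; first by rewrite /Cnorm2 /Defs.C1 /=; ring.
by rewrite Cnorm2_mul IH.
Qed.

Lemma Cnorm2_powz z r : Cnorm2 z <> 0 -> Cnorm2 (Cpowz z r) = powerRZ (Cnorm2 z) r.
Proof.
move=> H; case: r => [|p|p] /=.
- rewrite /Cnorm2 /Defs.C1 /=; ring.
- exact: Cnorm2_pown.
- rewrite Cnorm2_inv Cnorm2_pown //; exact: pow_nonzero.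
Qed.

Lemma Cmul_neq0 z w : z <> C0 -> w <> C0 -> Cmul z w <> C0.
Proof.
move=> /Cnorm2_neq0 Hz /Cnorm2_neq0 Hw /(f_equal Cnorm2).
rewrite Cnorm2_mul {3}/Cnorm2 /C0 /=; nra.
Qed.

Lemma Cpown_neq0 z n : z <> C0 -> Cpown z n <> C0.
Proof.
move=> Hz; elim: n => [|n IH] /=; last exact: Cmul_neq0.
rewrite /Defs.C1 /C0; case; lra.
Qed.

Lemma Rabs_fst_le z : Rabs (fst z) <= sqrt (Cnorm2 z).
Proof. rewrite -sqrt_Rsqr_abs; apply: sqrt_le_1_alt; rewrite /Rsqr /Cnorm2; nra. Qed.

Lemma Rabs_snd_le z : Rabs (snd z) <= sqrt (Cnorm2 z).
Proof. rewrite -sqrt_Rsqr_abs; apply: sqrt_le_1_alt; rewrite /Rsqr /Cnorm2; nra. Qed.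

Definition is_Cderive (g : R -> Cplx) (t : R) (v : Cplx) :=
  is_derive (fun s => fst (g s)) t (fst v) /\ is_derive (fun s => snd (g s)) t (snd v).

Lemma is_derive_eq (f : R -> R) (x l l' : R) : is_derive f x l -> l = l' -> is_derive f x l'.
Proof. by move=> H <-. Qed.

Lemma is_derive_Rmult (f g : R -> R) t a b : is_derive f t a -> is_derive g t b ->
  is_derive (fun s => f s * g s) t (a * g t + f t * b).
Proof. move=> H1 H2; exact: (Derive.is_derive_mult f g t a b H1 H2). Qed.

Lemma is_Cderive_eq g t v w : is_Cderive g t v -> v = w -> is_Cderive g t w.
Proof. by move=> H <-. Qed.

Lemma is_Cderive_const (c : Cplx) t : is_Cderive (fun _ => c) t C0.
Proof. split; apply: (is_derive_eq (is_derive_const _ _)); reflexivity. Qed.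

Lemma is_Cderive_add f g t a b : is_Cderive f t a -> is_Cderive g t b ->
  is_Cderive (fun s => Cadd (f s) (g s)) t (Cadd a b).
Proof. by move=> [H1 H2] [H3 H4]; split; apply: is_derive_plus. Qed.

Lemma is_Cderive_opp f t a : is_Cderive f t a -> is_Cderive (fun s => Copp (f s)) t (Copp a).
Proof. by move=> [H1 H2]; split; apply: is_derive_opp. Qed.

Lemma is_Cderive_mul f g t a b : is_Cderive f t a -> is_Cderive g t b ->
  is_Cderive (fun s => Cmul (f s) (g s)) t (Cadd (Cmul a (g t)) (Cmul (f t) b)).
Proof.
move=> [H1 H2] [H3 H4]; split; simpl.
- apply: (is_derive_eq (is_derive_minus _ _ _ _ _
    (is_derive_Rmult H1 H3) (is_derive_Rmult H2 H4))).
  rewrite /minus /plus /opp /=; ring.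
- apply: (is_derive_eq (is_derive_plus _ _ _ _ _
    (is_derive_Rmult H1 H4) (is_derive_Rmult H2 H3))).
  rewrite /plus /=; ring.
Qed.

Lemma is_Cderive_inv f t a : is_Cderive f t a -> f t <> C0 ->
  is_Cderive (fun s => Cinv (f s)) t (Copp (Cmul a (Cinv (Cmul (f t) (f t))))).
Proof.
move=> [H1 H2] /Cnorm2_neq0; rewrite /Cnorm2 => HN.
have HD : is_derive (fun s => fst (f s) * fst (f s) + snd (f s) * snd (f s)) t
    (2 * fst (f t) * fst a + 2 * snd (f t) * snd a).
  apply: (is_derive_eq (is_derive_plus _ _ _ _ _
    (is_derive_Rmult H1 H1) (is_derive_Rmult H2 H2))).
  rewrite /plus /=; ring.
have HI := is_derive_inv _ _ _ HD HN.
move: HN HI; rewrite /Cinv /=.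
set x := fst (f t); set y := snd (f t) => HN HI.
have HN2 : (x * x - y * y) * (x * x - y * y) + (x * y + y * x) * (x * y + y * x) <> 0.
  move=> H; apply: HN; nra.
split; rewrite /=.
- apply: (is_derive_eq (is_derive_Rmult H1 HI)).
  rewrite -/x -/y; field; split => //.
- apply: (is_derive_eq (is_derive_Rmult (is_derive_opp _ _ _ H2) HI)).
  rewrite /opp /= -/x -/y; field; split => //.
Qed.

Lemma is_Cderive_exp f t a : is_Cderive f t a ->
  is_Cderive (fun s => Cexp (f s)) t (Cmul (Cexp (f t)) a).
Proof.
move=> [H1 H2].
have Hexp : is_derive (fun s => exp (fst (f s))) t (exp (fst (f t)) * fst a).
  apply: (is_derive_eq (is_derive_comp _ _ _ _ _ (is_derive_exp _) H1)).
  rewrite /scal /= /mult /=; ring.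
have Hcos : is_derive (fun s => cos (snd (f s))) t (- sin (snd (f t)) * snd a).
  apply: (is_derive_eq (is_derive_comp _ _ _ _ _ (is_derive_cos _) H2)).
  rewrite /scal /= /mult /=; ring.
have Hsin : is_derive (fun s => sin (snd (f s))) t (cos (snd (f t)) * snd a).
  apply: (is_derive_eq (is_derive_comp _ _ _ _ _ (is_derive_sin _) H2)).
  rewrite /scal /= /mult /=; ring.
split; rewrite /Cexp /=.
- apply: (is_derive_eq (is_derive_Rmult Hexp Hcos)); ring.
- apply: (is_derive_eq (is_derive_Rmult Hexp Hsin)); ring.
Qed.

Definition Ccontinuity_2d_pt (g : R -> R -> Cplx) x y :=
  continuity_2d_pt (fun a b => fst (g a b)) x y /\
  continuity_2d_pt (fun a b => snd (g a b)) x y.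

Lemma Ccontinuity_2d_pt_const (c : Cplx) x y : Ccontinuity_2d_pt (fun _ _ => c) x y.
Proof. split; exact: continuity_2d_pt_const. Qed.

Lemma Ccontinuity_2d_pt_add f g x y : Ccontinuity_2d_pt f x y -> Ccontinuity_2d_pt g x y ->
  Ccontinuity_2d_pt (fun a b => Cadd (f a b) (g a b)) x y.
Proof. move=> [H1 H2] [H3 H4]; split; exact: continuity_2d_pt_plus. Qed.

Lemma Ccontinuity_2d_pt_opp f x y : Ccontinuity_2d_pt f x y ->
  Ccontinuity_2d_pt (fun a b => Copp (f a b)) x y.
Proof. move=> [H1 H2]; split; exact: continuity_2d_pt_opp. Qed.

Lemma Ccontinuity_2d_pt_mul f g x y : Ccontinuity_2d_pt f x y -> Ccontinuity_2d_pt g x y ->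
  Ccontinuity_2d_pt (fun a b => Cmul (f a b) (g a b)) x y.
Proof.
move=> [H1 H2] [H3 H4]; split; rewrite /Cmul /=.
- apply: continuity_2d_pt_minus; exact: continuity_2d_pt_mult.
- apply: continuity_2d_pt_plus; exact: continuity_2d_pt_mult.
Qed.

Lemma Ccontinuity_2d_pt_inv f x y : Ccontinuity_2d_pt f x y -> f x y <> C0 ->
  Ccontinuity_2d_pt (fun a b => Cinv (f a b)) x y.
Proof.
move=> [H1 H2] /Cnorm2_neq0; rewrite /Cnorm2 => HN.
have HD : continuity_2d_pt
    (fun a b => fst (f a b) * fst (f a b) + snd (f a b) * snd (f a b)) x y.
  apply: continuity_2d_pt_plus; exact: continuity_2d_pt_mult.
have HI := continuity_2d_pt_inv _ _ _ HD HN.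
split; rewrite /Cinv /=; apply: continuity_2d_pt_mult => //.
exact: continuity_2d_pt_opp.
Qed.

Lemma continuity_2d_pt_comp1 (h : R -> R) f x y :
  derivable h -> continuity_2d_pt f x y -> continuity_2d_pt (fun a b => h (f a b)) x y.
Proof. move=> Hh; apply: continuity_1d_2d_pt_comp; exact: derivable_continuous_pt. Qed.

Lemma Ccontinuity_2d_pt_exp f x y : Ccontinuity_2d_pt f x y ->
  Ccontinuity_2d_pt (fun a b => Cexp (f a b)) x y.
Proof.
move=> [H1 H2]; split; rewrite /Cexp /=; apply: continuity_2d_pt_mult;
  apply: continuity_2d_pt_comp1 => //;
  (exact: derivable_exp || exact: derivable_cos || exact: derivable_sin).
Qed.

(* Holomorphy of [P] on [U] with derivative [P'], encoded by what the proof
   needs: the chain rule along differentiable real curves, and continuity of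
   [P] and [P'] along continuous two-parameter families. *)
Definition Cderive_along (U : Cplx -> Prop) (P P' : Cplx -> Cplx) :=
  forall g t v, U (g t) -> is_Cderive g t v ->
    is_Cderive (fun s => P (g s)) t (Cmul (P' (g t)) v).
Definition Ccontinuous_on (U : Cplx -> Prop) (P : Cplx -> Cplx) :=
  forall g x y, U (g x y) -> Ccontinuity_2d_pt g x y ->
    Ccontinuity_2d_pt (fun a b => P (g a b)) x y.
Definition holo_on U P P' :=
  [/\ Cderive_along U P P', Ccontinuous_on U P & Ccontinuous_on U P'].

Section Holomorphy.

Variable U : Cplx -> Prop.

Lemma Ccontinuous_on_const c : Ccontinuous_on U (fun _ => c).
Proof. move=> g x y _ _; exact: Ccontinuity_2d_pt_const. Qed.

Lemma holo_on_id : holo_on U (fun u => u) (fun _ => Defs.C1).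
Proof.
split=> [g t v _ H||]; [apply: is_Cderive_eq H _; Cring|by []|exact: Ccontinuous_on_const].
Qed.

Lemma holo_on_const c : holo_on U (fun _ => c) (fun _ => C0).
Proof.
split; try exact: Ccontinuous_on_const.
move=> g t v _ _; apply: is_Cderive_eq (is_Cderive_const c t) _; Cring.
Qed.

Lemma holo_on_add P P' Q Q' : holo_on U P P' -> holo_on U Q Q' ->
  holo_on U (fun u => Cadd (P u) (Q u)) (fun u => Cadd (P' u) (Q' u)).
Proof.
move=> [DP CP CP'] [DQ CQ CQ']; split=> g x y Hu Hg.
- apply: is_Cderive_eq (is_Cderive_add (DP _ _ _ Hu Hg) (DQ _ _ _ Hu Hg)) _; Cring.
- exact: Ccontinuity_2d_pt_add (CP _ _ _ Hu Hg) (CQ _ _ _ Hu Hg).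
- exact: Ccontinuity_2d_pt_add (CP' _ _ _ Hu Hg) (CQ' _ _ _ Hu Hg).
Qed.

Lemma holo_on_opp P P' : holo_on U P P' ->
  holo_on U (fun u => Copp (P u)) (fun u => Copp (P' u)).
Proof.
move=> [DP CP CP']; split=> g x y Hu Hg.
- apply: is_Cderive_eq (is_Cderive_opp (DP _ _ _ Hu Hg)) _; Cring.
- exact: Ccontinuity_2d_pt_opp (CP _ _ _ Hu Hg).
- exact: Ccontinuity_2d_pt_opp (CP' _ _ _ Hu Hg).
Qed.

Lemma holo_on_sub P P' Q Q' : holo_on U P P' -> holo_on U Q Q' ->
  holo_on U (fun u => Csub (P u) (Q u)) (fun u => Cadd (P' u) (Copp (Q' u))).
Proof. by move=> HP HQ; apply: holo_on_add HP (holo_on_opp HQ). Qed.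

Lemma holo_on_mul P P' Q Q' : holo_on U P P' -> holo_on U Q Q' ->
  holo_on U (fun u => Cmul (P u) (Q u))
            (fun u => Cadd (Cmul (P' u) (Q u)) (Cmul (P u) (Q' u))).
Proof.
move=> [DP CP CP'] [DQ CQ CQ']; split=> g x y Hu Hg.
- apply: is_Cderive_eq (is_Cderive_mul (DP _ _ _ Hu Hg) (DQ _ _ _ Hu Hg)) _; Cring.
- exact: Ccontinuity_2d_pt_mul (CP _ _ _ Hu Hg) (CQ _ _ _ Hu Hg).
- by apply: Ccontinuity_2d_pt_add; apply: Ccontinuity_2d_pt_mul; auto.
Qed.

Lemma holo_on_inv P P' : (forall u, U u -> P u <> C0) -> holo_on U P P' ->
  holo_on U (fun u => Cinv (P u)) (fun u => Copp (Cmul (P' u) (Cinv (Cmul (P u) (P u))))).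
Proof.
move=> HP0 [DP CP CP']; split=> g x y Hu Hg.
- apply: is_Cderive_eq (is_Cderive_inv (DP _ _ _ Hu Hg) (HP0 _ Hu)) _.
  set w := Cinv _; Cring.
- exact: Ccontinuity_2d_pt_inv (CP _ _ _ Hu Hg) (HP0 _ Hu).
- apply: Ccontinuity_2d_pt_opp; apply: Ccontinuity_2d_pt_mul; first exact: CP'.
  have HPg := CP _ _ _ Hu Hg.
  apply: Ccontinuity_2d_pt_inv; first exact: (Ccontinuity_2d_pt_mul HPg HPg).
  exact: Cmul_neq0 (HP0 _ Hu) (HP0 _ Hu).
Qed.

Lemma holo_on_exp P P' : holo_on U P P' ->
  holo_on U (fun u => Cexp (P u)) (fun u => Cmul (Cexp (P u)) (P' u)).
Proof.
move=> [DP CP CP']; split=> g x y Hu Hg.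
- apply: is_Cderive_eq (is_Cderive_exp (DP _ _ _ Hu Hg)) _; Cring.
- exact: Ccontinuity_2d_pt_exp (CP _ _ _ Hu Hg).
- by apply: Ccontinuity_2d_pt_mul; [apply: Ccontinuity_2d_pt_exp|]; auto.
Qed.

Lemma holo_on_pown P P' n : holo_on U P P' ->
  exists Q', holo_on U (fun u => Cpown (P u) n) Q'.
Proof.
move=> HP; elim: n => [|n [Q' IH]] /=; first by eexists; exact: holo_on_const.
by eexists; exact: holo_on_mul HP IH.
Qed.

End Holomorphy.

Definition outside_unit_disk (u : Cplx) := 1 < Cnorm2 u.

Lemma outside_unit_disk_neq0 u : outside_unit_disk u -> u <> C0.
Proof. by rewrite /outside_unit_disk => H E; move: H; rewrite E /Cnorm2 /C0 /=; lra. Qed.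

Lemma outside_unit_disk_sub1 u : outside_unit_disk u -> Csub u Defs.C1 <> C0.
Proof.
rewrite /outside_unit_disk /Cnorm2 /Csub /Cadd /Copp /Defs.C1 /C0.
case: u => a b /= H [] H1 H2; nra.
Qed.

Lemma outside_unit_disk_add1 u : outside_unit_disk u -> Cadd u Defs.C1 <> C0.
Proof.
rewrite /outside_unit_disk /Cnorm2 /Cadd /Defs.C1 /C0.
case: u => a b /= H [] H1 H2; nra.
Qed.

Lemma holo_on_Cpowz r : exists P', holo_on outside_unit_disk (fun u => Cpowz u r) P'.
Proof.
case: r => [|p|p]; first by eexists; exact: holo_on_const.
all: have [Q HQ] := holo_on_pown (Pos.to_nat p) (holo_on_id outside_unit_disk).
- by eexists; exact: HQ.
- eexists; apply: holo_on_inv HQ => u Hu.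
  exact/Cpown_neq0/outside_unit_disk_neq0.
Qed.

(* On the circle [u = rho e^(i th)] one has [du = i u dth], so
   [contour_int2 f] averages [fst] and [snd] of [f u * u] over [th]. *)
Definition integrand_du t1 t2 r E G (u : Cplx) : Cplx := Cmul (integrand t1 t2 r E G u) u.

Lemma holo_on_integrand_du t1 t2 r E G :
  exists P', holo_on outside_unit_disk (integrand_du t1 t2 r E G) P'.
Proof.
set U := outside_unit_disk.
have Hid := holo_on_id U.
have Hsub := holo_on_sub Hid (holo_on_const U Defs.C1).
have Hadd := holo_on_add Hid (holo_on_const U Defs.C1).
have [P1 HE] := holo_on_pown E Hsub.
have [P2 HG] := holo_on_pown G Hadd.
have Hden := holo_on_inv _ (holo_on_mul HE HG).
have Hq1 := holo_on_mul (holo_on_const U t1) (holo_on_inv outside_unit_disk_sub1 Hsub).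
have Hq2 := holo_on_mul (holo_on_const U t2) (holo_on_inv outside_unit_disk_add1 Hadd).
have Hexp := holo_on_exp (holo_on_add Hq1 Hq2).
have [Pr Hr] := holo_on_Cpowz r.
eexists; apply: holo_on_mul (holo_on_mul (holo_on_mul Hr Hexp) (Hden _)) Hid.
by move=> u Hu; apply: Cmul_neq0; apply: Cpown_neq0;
  [exact: outside_unit_disk_sub1|exact: outside_unit_disk_add1].
Qed.

Definition polar (rho t : R) : Cplx := (rho * cos t, rho * sin t).

Lemma Cnorm2_polar rho t : Cnorm2 (polar rho t) = rho * rho.
Proof.
rewrite /Cnorm2 /polar /=; have := sin2_cos2 t; rewrite /Rsqr => E.
transitivity (rho * rho * (sin t * sin t + cos t * cos t)); first ring.
by rewrite E Rmult_1_r.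
Qed.

Lemma polar_outside_unit_disk rho t : 1 < rho -> outside_unit_disk (polar rho t).
Proof. by move=> H; rewrite /outside_unit_disk Cnorm2_polar; nra. Qed.

Lemma is_Cderive_polar_radius rho t : is_Cderive (fun s => polar s t) rho (cos t, sin t).
Proof.
split; rewrite /polar /=.
- apply: (is_derive_eq (is_derive_Rmult (is_derive_id rho) (is_derive_const (cos t) rho))).
  rewrite /Hierarchy.one /Hierarchy.zero /=; ring.
- apply: (is_derive_eq (is_derive_Rmult (is_derive_id rho) (is_derive_const (sin t) rho))).
  rewrite /Hierarchy.one /Hierarchy.zero /=; ring.
Qed.

Lemma is_Cderive_polar_angle rho t :
  is_Cderive (fun s => polar rho s) t (- (rho * sin t), rho * cos t).
Proof.
split; rewrite /polar /=.
- apply: (is_derive_eq (is_derive_Rmult (is_derive_const rho t) (is_derive_cos t))).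
  rewrite /Hierarchy.zero /=; ring.
- apply: (is_derive_eq (is_derive_Rmult (is_derive_const rho t) (is_derive_sin t))).
  rewrite /Hierarchy.zero /=; ring.
Qed.

Lemma continuity_2d_pt_cos2 x y : continuity_2d_pt (fun _ b => cos b) x y.
Proof. exact/(continuity_2d_pt_comp1 (f := fun _ b => b))/continuity_2d_pt_id2/derivable_cos. Qed.

Lemma continuity_2d_pt_sin2 x y : continuity_2d_pt (fun _ b => sin b) x y.
Proof. exact/(continuity_2d_pt_comp1 (f := fun _ b => b))/continuity_2d_pt_id2/derivable_sin. Qed.

Ltac continuity_polar := repeat first
  [ apply: continuity_2d_pt_mult | apply: continuity_2d_pt_opp
  | exact: continuity_2d_pt_id1 | exact: continuity_2d_pt_cos2 | exact: continuity_2d_pt_sin2 ].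

Lemma Ccontinuity_2d_pt_polar rho t : Ccontinuity_2d_pt polar rho t.
Proof. by split; rewrite /polar /=; continuity_polar. Qed.

Lemma Ccontinuity_2d_pt_polar_radius rho t :
  Ccontinuity_2d_pt (fun _ b => (cos b, sin b)) rho t.
Proof. by split; continuity_polar. Qed.

Lemma Ccontinuity_2d_pt_polar_angle rho t :
  Ccontinuity_2d_pt (fun a b => (- (a * sin b), a * cos b)) rho t.
Proof. by split; rewrite /=; continuity_polar. Qed.

Lemma ball_Rabs (x e y : R) : ball x e y <-> Rabs (y - x) < e.
Proof. by []. Qed.

Lemma locally_gt a x (Q : R -> Prop) : a < x -> (forall y, a < y -> Q y) -> locally x Q.
Proof.
move=> Hx HQ; have Hp : 0 < x - a by lra.
exists (mkposreal _ Hp) => y /ball_Rabs /= /Rabs_def2 Hy; apply: HQ; lra.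
Qed.

Lemma locally_2d_gt a x y (Q : R -> R -> Prop) :
  a < x -> (forall u v, a < u -> Q u v) -> locally_2d Q x y.
Proof.
move=> Hx HQ; have Hp : 0 < x - a by lra.
exists (mkposreal _ Hp) => u v /= /Rabs_def2 Hu _; apply: HQ; lra.
Qed.

Lemma continuity_2d_pt_continuous2 (h : R -> R -> R) x y :
  continuity_2d_pt h x y -> continuous (h x) y.
Proof.
move=> H; apply/filterlim_locally => eps; have [d Hd] := H eps.
exists d => t /ball_Rabs Ht; apply/ball_Rabs; apply: Hd => //.
by rewrite Rminus_eq_0 Rabs_R0; exact: cond_pos.
Qed.

Lemma RInt_derive_periodic (h dh : R -> R) a b :
  (forall t, is_derive h t (dh t)) -> (forall t, continuous dh t) -> h b = h a ->
  RInt dh a b = 0.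
Proof.
move=> Hh Hdh Hab.
rewrite (is_RInt_unique _ _ _ _ (is_RInt_derive h dh a b (fun t _ => Hh t) (fun t _ => Hdh t))).
by rewrite Hab /minus /plus /opp /=; ring.
Qed.

Lemma is_derive_eq0_const (F : R -> R) a x y :
  (forall z, a < z -> is_derive F z 0) -> a < x -> x <= y -> F y = F x.
Proof.
move=> HF Hx Hxy; case: (Req_dec x y) => [<-//|Hne].
have Hmin : Rmin x y = x by apply: Rmin_left.
have Hmax : Rmax x y = y by apply: Rmax_right.
have Hder : forall z, Rmin x y < z < Rmax x y -> is_derive F z 0.
  by rewrite Hmin Hmax => z Hz; apply: HF; lra.
have Hcont : forall z, Rmin x y <= z <= Rmax x y -> continuity_pt F z.
  rewrite Hmin Hmax => z Hz; apply/continuity_pt_filterlim/ex_derive_continuous.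
  by exists 0; apply: HF; lra.
have [c [_]] := MVT_gen F x y (fun _ => 0) Hder Hcont.
rewrite Rmult_0_l; lra.
Qed.

Lemma Rabs_le_div_eq0 x B : (forall rho, 2 <= rho -> Rabs x <= B / rho) -> x = 0.
Proof.
move=> Hx; have HB : 0 <= B by have := Hx 2 (Rle_refl 2); have := Rabs_pos x; lra.
case: (Req_dec x 0) => // /Rabs_pos_lt Hpos.
have Hrho : 2 <= 2 + B / Rabs x by have := Rle_mult_inv_pos _ _ HB Hpos; lra.
have /(Rmult_le_compat_r (2 + B / Rabs x)) := Hx _ Hrho.
have -> : B / (2 + B / Rabs x) * (2 + B / Rabs x) = B by field; lra.
have -> : Rabs x * (2 + B / Rabs x) = 2 * Rabs x + B by field; lra.
lra.
Qed.

(* Polar Cauchy-Riemann: the radial derivative of [P (polar rho t)] is the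
   angular one divided by [i rho]. *)
Lemma polar_Cauchy_Riemann (w : Cplx) rho t : rho <> 0 ->
  fst (Cmul w (cos t, sin t)) = snd (Cmul w (- (rho * sin t), rho * cos t)) / rho.
Proof. by move=> H; rewrite /Cmul /=; field. Qed.

Section CircleIntegral.

Variables P P' : Cplx -> Cplx.
Hypothesis HP : holo_on outside_unit_disk P P'.

Lemma is_Cderive_circle_radius rho t : 1 < rho ->
  is_Cderive (fun s => P (polar s t)) rho (Cmul (P' (polar rho t)) (cos t, sin t)).
Proof.
by move=> H; case: HP => D _ _; apply: D;
  [exact: polar_outside_unit_disk|exact: is_Cderive_polar_radius].
Qed.

Lemma is_Cderive_circle_angle rho t : 1 < rho ->
  is_Cderive (fun s => P (polar rho s)) t
    (Cmul (P' (polar rho t)) (- (rho * sin t), rho * cos t)).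
Proof.
by move=> H; case: HP => D _ _; apply: D;
  [exact: polar_outside_unit_disk|exact: is_Cderive_polar_angle].
Qed.

Lemma Ccontinuity_2d_pt_circle_derive rho t : 1 < rho ->
  Ccontinuity_2d_pt (fun a b => P' (polar a b)) rho t.
Proof.
by move=> H; case: HP => _ _ C'; apply: C';
  [exact: polar_outside_unit_disk|exact: Ccontinuity_2d_pt_polar].
Qed.

Lemma ex_RInt_circle rho : 1 < rho ->
  ex_RInt (fun t => fst (P (polar rho t))) 0 (2 * PI) /\
  ex_RInt (fun t => snd (P (polar rho t))) 0 (2 * PI).
Proof.
move=> H; split; apply: ex_RInt_continuous => t _; apply: ex_derive_continuous;
  eexists; [exact: (is_Cderive_circle_angle t H).1|exact: (is_Cderive_circle_angle t H).2].
Qed.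

Lemma is_derive_circle_RInt_fst rho : 1 < rho ->
  is_derive (fun s => RInt (fun t => fst (P (polar s t))) 0 (2 * PI)) rho 0.
Proof.
move=> Hrho; have Hrho0 : rho <> 0 by lra.
pose dr a b := fst (Cmul (P' (polar a b)) (cos b, sin b)).
have Hdr u v : 1 < u -> Derive (fun z => fst (P (polar z v))) u = dr u v.
  by move=> Hu; apply: is_derive_unique; exact: (is_Cderive_circle_radius v Hu).1.
apply: (is_derive_eq (is_derive_RInt_param _ _ _ _ _ _ _)).
- apply: (locally_gt (a := 1)) => // y Hy t _; eexists.
  exact: (is_Cderive_circle_radius t Hy).1.
- move=> t _; apply: (continuity_2d_pt_ext_loc dr).
  + by apply: (locally_2d_gt (a := 1)) => // u v Hu; rewrite Hdr.
  + exact: (Ccontinuity_2d_pt_mul (Ccontinuity_2d_pt_circle_derive t Hrho)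
                                   (Ccontinuity_2d_pt_polar_radius rho t)).1.
- by apply: (locally_gt (a := 1)) => // y Hy; case: (ex_RInt_circle Hy).
- pose da b := snd (Cmul (P' (polar rho b)) (- (rho * sin b), rho * cos b)) / rho.
  rewrite (RInt_ext _ da) => [|t _]; last by rewrite Hdr // /dr (polar_Cauchy_Riemann _ _ Hrho0).
  apply: (RInt_derive_periodic (h := fun t => snd (P (polar rho t)) / rho)).
  + move=> t; apply: (is_derive_eq (is_derive_Rmult
      (is_Cderive_circle_angle t Hrho).2 (is_derive_const (/ rho) t))).
    by rewrite /Hierarchy.zero /da /Rdiv /=; ring.
  + move=> t; rewrite /da; apply: (continuity_2d_pt_continuous2
      (h := fun a b => snd (Cmul (P' (polar a b)) (- (a * sin b), a * cos b)) / a)).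
    apply: continuity_2d_pt_mult.
    * exact: (Ccontinuity_2d_pt_mul (Ccontinuity_2d_pt_circle_derive t Hrho)
                                     (Ccontinuity_2d_pt_polar_angle rho t)).2.
    * by apply: continuity_2d_pt_inv => //; exact: continuity_2d_pt_id1.
  + by rewrite /polar cos_2PI sin_2PI cos_0 sin_0.
Qed.

(* The integral over the circle of radius [rho] does not depend on [rho],
   while decay of [P] bounds it by [2 pi B / rho]. *)
Lemma circle_RInt_fst_eq0 B :
  (forall rho t, 2 <= rho -> Rabs (fst (P (polar rho t))) <= B / rho) ->
  RInt (fun t => fst (P (polar 2 t))) 0 (2 * PI) = 0.
Proof.
move=> Hdecay; have HPI := PI_RGT_0.
apply: (Rabs_le_div_eq0 (B := 2 * PI * B)) => rho Hrho.
rewrite -(is_derive_eq0_const (is_derive_circle_RInt_fst) (x := 2) (y := rho)); try lra.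
have -> : 2 * PI * B / rho = (2 * PI - 0) * (B / rho) by rewrite /Rdiv; ring.
apply: abs_RInt_le_const; first lra.
- by case: (ex_RInt_circle (rho := rho)); first lra.
- by move=> t _; apply: Hdecay.
Qed.

End CircleIntegral.

Lemma circle_RInt_snd_eq0 P P' B : holo_on outside_unit_disk P P' ->
  (forall rho t, 2 <= rho -> Rabs (snd (P (polar rho t))) <= B / rho) ->
  RInt (fun t => snd (P (polar 2 t))) 0 (2 * PI) = 0.
Proof.
move=> HP Hdecay.
have HfstE z : fst (Cmul (0, -1) z) = snd z by rewrite /Cmul /=; ring.
have := circle_RInt_fst_eq0 (holo_on_mul (holo_on_const _ (0, -1)) HP) (B := B).
rewrite (_ : (fun t => _) = (fun t => snd (P (polar 2 t)))); last first.
  by apply: functional_extensionality => t; rewrite HfstE.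
by apply=> rho t Hrho; rewrite HfstE; apply: Hdecay.
Qed.

Lemma powerRZ_le_mono x a b : 1 <= x -> (a <= b)%Z -> powerRZ x a <= powerRZ x b.
Proof.
move=> Hx Hab; have Hx0 : 0 < x by lra.
have -> : b = (a + Z.of_nat (Z.to_nat (b - a)))%Z by rewrite Z2Nat.id; lia.
rewrite powerRZ_add -?pow_powerRZ; last lra.
have := pow_R1_Rle _ (Z.to_nat (b - a)) Hx; have := powerRZ_le x a Hx0; nra.
Qed.

Lemma powerRZ_mul_pow_inv x r E G : 0 < x ->
  powerRZ x r * x * / (x ^ E * x ^ G) = powerRZ x (r + 1 - Z.of_nat E - Z.of_nat G).
Proof.
move=> Hx; have Hx0 : x <> 0 by lra.
have -> : (r + 1 - Z.of_nat E - Z.of_nat G = ((r + 1) + - Z.of_nat E) + - Z.of_nat G)%Z by lia.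
rewrite !powerRZ_add // !powerRZ_neg' -!pow_powerRZ powerRZ_1.
by field; split; apply: pow_nonzero.
Qed.

Lemma Rinv_pow_mul_le x a b E G : 0 < x -> x / 4 <= a -> x / 4 <= b ->
  / (a ^ E * b ^ G) <= 4 ^ (E + G) * / (x ^ E * x ^ G).
Proof.
move=> Hx Ha Hb.
have HxE : 0 < (x / 4) ^ E by apply: pow_lt; lra.
have HxG : 0 < (x / 4) ^ G by apply: pow_lt; lra.
apply: (Rle_trans _ (/ ((x / 4) ^ E * (x / 4) ^ G))).
  apply: Rinv_le_contravar; first nra.
  by apply: Rmult_le_compat; try lra; apply: pow_incr; lra.
have Hdiv4 n : (x / 4) ^ n = x ^ n * / 4 ^ n by rewrite /Rdiv Rpow_mult_distr pow_inv.
rewrite !Hdiv4 pow_add; right.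
by field; repeat split; apply: pow_nonzero; lra.
Qed.

Lemma Cnorm2_polar_sub1_ge rho t : 2 <= rho -> rho * rho / 4 <= Cnorm2 (Csub (polar rho t) Defs.C1).
Proof.
move=> H; rewrite /Cnorm2 /polar /Csub /Cadd /Copp /Defs.C1 /=.
have := sin2_cos2 t; rewrite /Rsqr; have := COS_bound t; nra.
Qed.

Lemma Cnorm2_polar_add1_ge rho t : 2 <= rho -> rho * rho / 4 <= Cnorm2 (Cadd (polar rho t) Defs.C1).
Proof.
move=> H; rewrite /Cnorm2 /polar /Cadd /Defs.C1 /=.
have := sin2_cos2 t; rewrite /Rsqr; have := COS_bound t; nra.
Qed.

Lemma fst_Cdiv_le t z : 1 <= Cnorm2 z -> fst (Cdiv t z) <= sqrt (Cnorm2 t).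
Proof.
move=> Hz; apply: Rle_trans (Rle_abs _) _; apply: Rle_trans (Rabs_fst_le _) _.
apply: sqrt_le_1_alt; rewrite /Cdiv Cnorm2_mul Cnorm2_inv; last lra.
have : / Cnorm2 z <= 1 by rewrite -Rinv_1; apply: Rinv_le_contravar; lra.
have : 0 <= / Cnorm2 z by apply/Rlt_le/Rinv_0_lt_compat; lra.
have := Cnorm2_ge0 t; nra.
Qed.

Lemma Cnorm2_Cexp_Cdiv_le t1 t2 a b : 1 <= Cnorm2 a -> 1 <= Cnorm2 b ->
  Cnorm2 (Cexp (Cadd (Cdiv t1 a) (Cdiv t2 b))) <=
  exp (sqrt (Cnorm2 t1) + sqrt (Cnorm2 t2)) * exp (sqrt (Cnorm2 t1) + sqrt (Cnorm2 t2)).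
Proof.
move=> Ha Hb; rewrite Cnorm2_exp.
change (fst (Cadd ?p ?q)) with (fst p + fst q).
have Hle : exp (fst (Cdiv t1 a) + fst (Cdiv t2 b)) <= exp (sqrt (Cnorm2 t1) + sqrt (Cnorm2 t2)).
  have := fst_Cdiv_le t1 Ha; have := fst_Cdiv_le t2 Hb => H2 H1.
  by case: (Rle_lt_or_eq_dec _ _ (Rplus_le_compat _ _ _ _ H1 H2)) => [/exp_increasing|->]; lra.
by have := exp_pos (fst (Cdiv t1 a) + fst (Cdiv t2 b)); nra.
Qed.

Lemma Cnorm2_integrand_du t1 t2 r E G u : outside_unit_disk u ->
  Cnorm2 (integrand_du t1 t2 r E G u) =
  powerRZ (Cnorm2 u) r
  * Cnorm2 (Cexp (Cadd (Cdiv t1 (Csub u Defs.C1)) (Cdiv t2 (Cadd u Defs.C1))))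
  * / (Cnorm2 (Csub u Defs.C1) ^ E * Cnorm2 (Cadd u Defs.C1) ^ G) * Cnorm2 u.
Proof.
move=> Hu; have Hden := Cmul_neq0 (Cpown_neq0 (n := E) (outside_unit_disk_sub1 Hu))
                                   (Cpown_neq0 (n := G) (outside_unit_disk_add1 Hu)).
rewrite /integrand_du /integrand Cnorm2_mul /Cdiv Cnorm2_mul Cnorm2_inv; last exact: Cnorm2_neq0.
rewrite !Cnorm2_mul !Cnorm2_pown Cnorm2_powz //.
exact/Cnorm2_neq0/outside_unit_disk_neq0.
Qed.

Lemma Cnorm2_integrand_du_le t1 t2 r E G rho t : (r - Z.of_nat E - Z.of_nat G <= -2)%Z ->
  2 <= rho ->
  Cnorm2 (integrand_du t1 t2 r E G (polar rho t)) <=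
  exp (sqrt (Cnorm2 t1) + sqrt (Cnorm2 t2)) * exp (sqrt (Cnorm2 t1) + sqrt (Cnorm2 t2))
  * 4 ^ (E + G) / (rho * rho).
Proof.
move=> Hdeg Hrho; set x := rho * rho.
have Hx4 : 4 <= x by rewrite /x; nra.
have Hx : 0 < x by lra.
have Hsub := Cnorm2_polar_sub1_ge t Hrho; have Hadd := Cnorm2_polar_add1_ge t Hrho.
rewrite -/x in Hsub Hadd.
rewrite Cnorm2_integrand_du; last by apply: polar_outside_unit_disk; lra.
rewrite Cnorm2_polar -/x.
have Hexp : Cnorm2 (Cexp (Cadd (Cdiv t1 (Csub (polar rho t) Defs.C1))
                              (Cdiv t2 (Cadd (polar rho t) Defs.C1)))) <=
            exp (sqrt (Cnorm2 t1) + sqrt (Cnorm2 t2)) * exp (sqrt (Cnorm2 t1) + sqrt (Cnorm2 t2)).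
  by apply: Cnorm2_Cexp_Cdiv_le; lra.
move: Hexp; set X := Cnorm2 (Cexp _); set S := exp _ * exp _ => Hexp.
have Hinv := Rinv_pow_mul_le E G Hx Hsub Hadd.
have Hpow : powerRZ x (r + 1 - Z.of_nat E - Z.of_nat G) <= / x.
  have -> : / x = powerRZ x (-1) by rewrite /= Rmult_1_r.
  by apply: powerRZ_le_mono; [lra|lia].
have HX : 0 <= X by exact: Cnorm2_ge0.
have Hr := powerRZ_le x r Hx.
have H4 : 0 < 4 ^ (E + G) by apply: pow_lt; lra.
apply: (Rle_trans _ (powerRZ x r * S * (4 ^ (E + G) * / (x ^ E * x ^ G)) * x)).
  apply: Rmult_le_compat_r; first lra.
  apply: Rmult_le_compat; try nra.
  by apply/Rlt_le/Rinv_0_lt_compat/Rmult_lt_0_compat; apply: pow_lt; lra.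
rewrite -(powerRZ_mul_pow_inv r E G Hx) in Hpow.
have HS : 0 <= S by rewrite /S; have := exp_pos (sqrt (Cnorm2 t1) + sqrt (Cnorm2 t2)); nra.
have -> : powerRZ x r * S * (4 ^ (E + G) * / (x ^ E * x ^ G)) * x =
          S * 4 ^ (E + G) * (powerRZ x r * x * / (x ^ E * x ^ G)) by ring.
by apply: Rmult_le_compat_l; [nra|exact: Hpow].
Qed.

Lemma integrand_du_decay t1 t2 r E G : (r - Z.of_nat E - Z.of_nat G <= -2)%Z ->
  exists B, forall rho t, 2 <= rho ->
    Rabs (fst (integrand_du t1 t2 r E G (polar rho t))) <= B / rho /\
    Rabs (snd (integrand_du t1 t2 r E G (polar rho t))) <= B / rho.
Proof.
move=> Hdeg.
set C := exp (sqrt (Cnorm2 t1) + sqrt (Cnorm2 t2)) * exp (sqrt (Cnorm2 t1) + sqrt (Cnorm2 t2))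
         * 4 ^ (E + G).
have HC : 0 <= C.
  apply: Rmult_le_pos; last by apply: pow_le; lra.
  by have := exp_pos (sqrt (Cnorm2 t1) + sqrt (Cnorm2 t2)); nra.
exists (sqrt C) => rho t Hrho.
have Hnorm : sqrt (Cnorm2 (integrand_du t1 t2 r E G (polar rho t))) <= sqrt C / rho.
  rewrite -(sqrt_square (sqrt C / rho)); last first.
    by apply: Rmult_le_pos; [exact: sqrt_pos|apply/Rlt_le/Rinv_0_lt_compat; lra].
  apply: sqrt_le_1_alt.
  have -> : sqrt C / rho * (sqrt C / rho) = sqrt C * sqrt C / (rho * rho) by field; lra.
  by rewrite sqrt_sqrt //; exact: Cnorm2_integrand_du_le.
by split; apply: Rle_trans Hnorm; [exact: Rabs_fst_le|exact: Rabs_snd_le].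
Qed.

Lemma Defs_RInt_eq f a b : ex_RInt f a b -> Defs.RInt f a b = RInt f a b.
Proof.
move=> /ex_RInt_Reals_0 pr; rewrite /Defs.RInt.
have Hex : exists v, exists pr : Riemann_integrable f a b, RiemannInt pr = v
  by exists (RiemannInt pr), pr.
have [pr' <-] := epsilon_spec (inhabits R0) _ Hex.
by rewrite (RInt_Reals f a b pr').
Qed.

Lemma Iint_eq0 t1 t2 r E G : (r - Z.of_nat E - Z.of_nat G <= -2)%Z -> Iint t1 t2 r E G = C0.
Proof.
move=> Hdeg.
have [P' HP] := holo_on_integrand_du t1 t2 r E G.
have [B HB] := integrand_du_decay t1 t2 Hdeg.
have [Hfst Hsnd] := ex_RInt_circle HP (rho := 2) ltac:(lra).
rewrite /Iint /contour_int2.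
change (fun th => fst (Cmul (integrand t1 t2 r E G (circ th)) (circ th)))
  with (fun th => fst (integrand_du t1 t2 r E G (polar 2 th))).
change (fun th => snd (Cmul (integrand t1 t2 r E G (circ th)) (circ th)))
  with (fun th => snd (integrand_du t1 t2 r E G (polar 2 th))).
rewrite !Defs_RInt_eq //.
rewrite (circle_RInt_fst_eq0 HP (fun rho t H => proj1 (HB rho t H))).
rewrite (circle_RInt_snd_eq0 HP (fun rho t H => proj2 (HB rho t H))).
by rewrite /Rdiv Rmult_0_l.
Qed.

Close Scope R_scope.

Lemma CaddA : associative Cadd.
Proof. by move=> a b c; apply: Cplx_eq; rewrite /Cadd /=; ring. Qed.
Lemma CaddC : commutative Cadd.
Proof. by move=> a b; apply: Cplx_eq; rewrite /Cadd /=; ring. Qed.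
Lemma Cadd0l : left_id C0 Cadd.
Proof. by move=> a; apply: Cplx_eq; rewrite /Cadd /C0 /=; ring. Qed.
HB.instance Definition _ := Monoid.isComLaw.Build Cplx C0 Cadd CaddA CaddC Cadd0l.

Lemma CmulA : associative Cmul.
Proof. by move=> a b c; apply: Cplx_eq; rewrite /Cmul /=; ring. Qed.
Lemma CmulC : commutative Cmul.
Proof. by move=> a b; apply: Cplx_eq; rewrite /Cmul /=; ring. Qed.
Lemma Cmul1l : left_id Defs.C1 Cmul.
Proof. by move=> a; apply: Cplx_eq; rewrite /Cmul /Defs.C1 /=; ring. Qed.
HB.instance Definition _ := Monoid.isComLaw.Build Cplx Defs.C1 Cmul CmulA CmulC Cmul1l.

Lemma Cdet_eq0_of_perm_zero n (A : 'I_n -> 'I_n -> Cplx) :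
  (forall s : 'S_n, exists i, A i (s i) = C0) -> Cdet A = C0.
Proof.
move=> H; apply: big1 => s _; have [i Hi] := H s.
by rewrite (bigD1 i) //= Hi; Cring.
Qed.

Lemma Cdet_neq0_perm n (A : 'I_n -> 'I_n -> Cplx) :
  Cdet A <> C0 -> exists s : 'S_n, forall i, A i (s i) <> C0.
Proof.
move=> HA; apply: NNPP => Hnone; apply/HA/Cdet_eq0_of_perm_zero => s.
by apply: NNPP => Hs; apply: Hnone; exists s => i Hi; apply: Hs; exists i.
Qed.

Lemma Copp_add a b : Copp (Cadd a b) = Cadd (Copp a) (Copp b).
Proof. by apply: Cplx_eq; rewrite /Cadd /Copp /=; ring. Qed.

Lemma Copp0 : Copp C0 = C0.
Proof. by apply: Cplx_eq; rewrite /Copp /C0 /=; ring. Qed.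

(* Composing with the transposition of the two equal rows negates every term
   of the Leibniz expansion, so [Cdet A = - Cdet A]. *)
Lemma Cdet_eq0_of_equal_rows n (A : 'I_n -> 'I_n -> Cplx) (i1 i2 : 'I_n) :
  i1 != i2 -> (forall j, A i1 j = A i2 j) -> Cdet A = C0.
Proof.
move=> Hne Hrow; set t := tperm i1 i2.
have HA i j : A (t i) j = A i j by rewrite /t; case: tpermP => [->|->|] //; rewrite Hrow.
have Hterm (s : 'S_n) :
  Cmul (if odd_perm (t * s)%g then Copp Defs.C1 else Defs.C1)
       (\big[Cmul/Defs.C1]_(i < n) A i ((t * s)%g i))
  = Copp (Cmul (if odd_perm s then Copp Defs.C1 else Defs.C1)
               (\big[Cmul/Defs.C1]_(i < n) A i (s i))).
  have -> : \big[Cmul/Defs.C1]_(i < n) A i ((t * s)%g i) = \big[Cmul/Defs.C1]_(i < n) A i (s i).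
    rewrite (reindex_inj (@perm_inj _ t)) /=.
    by apply: eq_bigr => i _; rewrite permM -HA /t tpermK.
  by rewrite odd_permM odd_tperm Hne /=; case: (odd_perm s); Cring.
have HS : Cdet A = Copp (Cdet A).
  rewrite {1}/Cdet (reindex_inj (@mulgI _ t)) /= (eq_bigr _ (fun s _ => Hterm s)).
  by symmetry; apply: (big_morph Copp Copp_add Copp0).
by move: HS; case: (Cdet A) => x y [] H1 H2; rewrite /C0; f_equal; lra.
Qed.

Lemma sorted_ltn_nth_ge (s : seq nat) m : sorted ltn s -> all (leq m) s ->
  forall k, k < size s -> m + k <= nth 0 s k.
Proof.
elim: s m => [//|x s IH] m /= Hs /andP [Hmx Hall] [|k] Hk /=; first by rewrite addn0.
have Hs' : sorted ltn s := path_sorted Hs.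
have Hall' : all (leq m.+1) s.
  apply/allP => y Hy; exact: leq_ltn_trans Hmx (allP (order_path_min ltn_trans Hs) y Hy).
by rewrite -addSnnS; apply: IH.
Qed.

Lemma sorted_ltn_sum_leqif n (s : seq nat) : sorted ltn s -> size s = n ->
  \sum_(k < n) k <= \sum_(k < n) nth 0 s k ?= iff [forall k : 'I_n, k == nth 0 s k :> nat].
Proof.
move=> Hs Hsz; apply: leqif_sum => k _; apply: leqif_eq.
by rewrite -[leqLHS]add0n; apply: sorted_ltn_nth_ge => //; [apply/allP|rewrite Hsz].
Qed.

Section InjectiveOrd.

Variables (n : nat) (a : 'I_n -> nat).
Hypothesis a_inj : injective a.

Let s := sort leq [seq a i | i <- enum 'I_n].

Let s_perm : perm_eq s [seq a i | i <- enum 'I_n].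
Proof. by rewrite perm_sort. Qed.

Let s_size : size s = n.
Proof. by rewrite (perm_size s_perm) size_map size_enum_ord. Qed.

Let s_sorted : sorted ltn s.
Proof.
rewrite ltn_sorted_uniq_leq (perm_uniq s_perm) map_inj_uniq ?enum_uniq //=.
exact/sort_sorted/leq_total.
Qed.

Let sum_s : \sum_(i < n) a i = \sum_(k < n) nth 0 s k.
Proof.
have -> : \sum_(k < n) nth 0 s k = \sum_(x <- s) x by rewrite (big_nth 0) s_size big_mkord.
by rewrite (perm_big _ s_perm) big_map enumT.
Qed.

Lemma sum_ord_le_sum_inj : \sum_(i < n) i <= \sum_(i < n) a i.
Proof. by rewrite sum_s; case: (sorted_ltn_sum_leqif s_sorted s_size). Qed.

Lemma sum_inj_eq_sum_ord_surj : \sum_(i < n) a i = \sum_(i < n) i ->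
  forall k, k < n -> exists i, a i = k.
Proof.
rewrite sum_s => Heq k Hk.
have /esym := (sorted_ltn_sum_leqif s_sorted s_size).2; rewrite Heq eqxx.
move/forallP/(_ (Ordinal Hk))/eqP => /= Hkk.
have : k \in s by rewrite Hkk mem_nth // s_size.
by rewrite (perm_mem s_perm) => /mapP [i _ ->]; exists i.
Qed.

End InjectiveOrd.

HB.instance Definition _ := SemiGroup.isComLaw.Build Z Z.max Z.max_assoc Z.max_comm.
HB.instance Definition _ := Monoid.isComLaw.Build Z 0%Z Z.add Z.add_assoc Z.add_comm Z.add_0_l.

Lemma le_bigmaxZ n (F : 'I_n -> Z) x0 i : (F i <= \big[Z.max/x0]_(j < n) F j)%Z.
Proof. by rewrite (big_rem_AC _ _ _ _ (mem_index_enum i)) /=; apply: Z.le_max_l. Qed.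

Lemma bigmaxZ_attained n (F : 'I_n -> Z) i0 :
  exists i, \big[Z.max/F i0]_(j < n) F j = F i.
Proof.
apply: (big_ind (fun x => exists i, x = F i)); [by exists i0| |by move=> i; exists i].
by move=> x y [i ->] [j ->]; case: (Z.max_spec (F i) (F j)) => [[_ ->]|[_ ->]]; eauto.
Qed.

Lemma exists_row_max n (r : 'I_n -> Z) (i0 : 'I_n) : exists im, forall i, (r i <= r im)%Z.
Proof.
by have [im Him] := bigmaxZ_attained r i0; exists im => i; rewrite -Him; exact: le_bigmaxZ.
Qed.

Section Degrees.

Variables (n : nat) (r c : 'I_n -> Z) (E G : 'I_n -> nat).

Lemma col_deg_ge_entry i j : (entry_deg r c E G i j <= col_deg r c E G j)%Z.
Proof.
rewrite /col_deg; case Hen : (enum 'I_n) => [|i0 l]; last exact: le_bigmaxZ.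
by have := mem_enum 'I_n i; rewrite Hen in_nil.
Qed.

Lemma col_deg_attained j : exists i, col_deg r c E G j = entry_deg r c E G i j.
Proof.
rewrite /col_deg; case Hen : (enum 'I_n) => [|i0 l].
  by have := mem_enum 'I_n j; rewrite Hen in_nil.
exact: (bigmaxZ_attained (fun i => entry_deg r c E G i j) i0).
Qed.

Lemma col_deg_row_max im : (forall i, (r i <= r im)%Z) ->
  forall j, col_deg r c E G j = entry_deg r c E G im j.
Proof.
move=> Hmax j; have [i Hi] := col_deg_attained j.
have := col_deg_ge_entry (i := im) (j := j); have := Hmax i; rewrite Hi /entry_deg; lia.
Qed.

Lemma tot_deg_perm (s : 'S_n) :
  tot_deg r c E G = \big[Z.add/0%Z]_(i < n) col_deg r c E G (s i).
Proof. by rewrite /tot_deg (reindex_inj (@perm_inj _ s)). Qed.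

End Degrees.

Definition Iint_matrix n t1 t2 (r c : 'I_n -> Z) (E G : 'I_n -> nat) (i j : 'I_n) : Cplx :=
  Iint t1 t2 (c j + r i)%Z (E j) (G j).

Lemma Cdet_Iint_neq0_degrees n t1 t2 (r c : 'I_n -> Z) (E G : 'I_n -> nat) im :
  (forall i, (r i <= r im)%Z) -> Cdet (Iint_matrix t1 t2 r c E G) <> C0 ->
  exists (s0 : 'S_n) (b : 'I_n -> nat),
    injective b /\ forall i, (Z.of_nat (b i) - 1 <= col_deg r c E G (s0 i))%Z.
Proof.
move=> Hmax Hdet; have [s0 Hs0] := Cdet_neq0_perm Hdet.
exists s0, (fun i => Z.to_nat (r im - r i)); split.
- move=> i1 i2 /= Hb; apply/eqP; apply: contraT => Hne; exfalso; apply: Hdet.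
  apply: (Cdet_eq0_of_equal_rows Hne) => j; rewrite /Iint_matrix.
  have -> // : r i1 = r i2.
  by have := Hmax i1; have := Hmax i2; have := Z2Nat.inj _ _ _ _ Hb; lia.
- move=> i; rewrite Z2Nat.id; last by have := Hmax i; lia.
  apply/Z.nlt_ge => Hlt; apply: (Hs0 i); apply: Iint_eq0.
  by move: Hlt; rewrite (col_deg_row_max _ _ _ Hmax) /entry_deg; lia.
Qed.

Lemma sumZ_le n (F H : 'I_n -> Z) : (forall i, (F i <= H i)%Z) ->
  (\big[Z.add/0%Z]_(i < n) F i <= \big[Z.add/0%Z]_(i < n) H i)%Z.
Proof.
by move=> FH; apply: (big_ind2 (fun x y => (x <= y)%Z)) => // *; lia.
Qed.

Lemma sumZ_le_eq n (F H : 'I_n -> Z) : (forall i, (F i <= H i)%Z) ->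
  \big[Z.add/0%Z]_(i < n) F i = \big[Z.add/0%Z]_(i < n) H i -> forall i, F i = H i.
Proof.
move=> FH Heq i; apply: Z.le_antisymm; first exact: FH.
move: Heq; rewrite (bigD1 i) //= [in X in _ = X](bigD1 i) //=.
match goal with |- (_ + ?restF = _ + ?restH)%Z -> _ =>
  have : (restF <= restH)%Z by apply: (big_ind2 (fun x y => (x <= y)%Z)) => // *; lia
end.
lia.
Qed.

Lemma Z_of_nat_sum n (f : 'I_n -> nat) :
  Z.of_nat (\sum_(i < n) f i) = \big[Z.add/0%Z]_(i < n) Z.of_nat (f i).
Proof. exact: (big_morph Z.of_nat Nat2Z.inj_add). Qed.

Lemma double_sum_ord n : (2 * Z.of_nat (\sum_(i < n) i) = Z.of_nat n * (Z.of_nat n - 1))%Z.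
Proof.
elim: n => [|n IH]; first by rewrite big_ord0.
rewrite big_ord_recr Nat2Z.inj_add Nat2Z.inj_succ Z.mul_add_distr_l.
rewrite (eq_bigr (fun i : 'I_n => nat_of_ord i)) // IH.
change (Z.of_nat (@ord_max n)) with (Z.of_nat n); lia.
Qed.

Section ShiftedInjective.

Variables (n : nat) (b : 'I_n -> nat) (d : 'I_n -> Z).
Hypotheses (b_inj : injective b) (d_ge : forall i, (Z.of_nat (b i) - 1 <= d i)%Z).

Let sum_b_ge : (Z.of_nat (\sum_(i < n) i) <= Z.of_nat (\sum_(i < n) b i))%Z.
Proof. exact/Nat2Z.inj_le/leP/sum_ord_le_sum_inj. Qed.

Let sum_b_shift : \big[Z.add/0%Z]_(i < n) (Z.of_nat (b i) - 1)%Z =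
  (Z.of_nat (\sum_(i < n) b i) - Z.of_nat n)%Z.
Proof.
rewrite big_split /= Z_of_nat_sum; congr (_ + _)%Z.
by rewrite big_const_ord; elim: n => [//|m IH]; rewrite iterS IH; lia.
Qed.

Let sum_d_ge : (Z.of_nat (\sum_(i < n) b i) - Z.of_nat n <= \big[Z.add/0%Z]_(i < n) d i)%Z.
Proof. by rewrite -sum_b_shift; exact: sumZ_le. Qed.

Lemma sumZ_shifted_inj_ge :
  (Z.of_nat n * (Z.of_nat n - 3) <= 2 * \big[Z.add/0%Z]_(i < n) d i)%Z.
Proof. by have := double_sum_ord n; have := sum_b_ge; have := sum_d_ge; lia. Qed.

Lemma sumZ_shifted_inj_eq :
  (2 * \big[Z.add/0%Z]_(i < n) d i = Z.of_nat n * (Z.of_nat n - 3))%Z ->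
  exists s : 'S_n, forall k : 'I_n, d (s k) = (Z.of_nat k - 1)%Z.
Proof.
move=> Hsum; have := double_sum_ord n; have := sum_b_ge; have := sum_d_ge => Hd Hb Htri.
have Hsb : \sum_(i < n) b i = \sum_(i < n) i by apply: Nat2Z.inj; lia.
have Hbd : forall i, (Z.of_nat (b i) - 1)%Z = d i.
  by apply: sumZ_le_eq => //; rewrite sum_b_shift; lia.
have Hsurj := sum_inj_eq_sum_ord_surj b_inj Hsb.
pose inv_b (k : 'I_n) := odflt k [pick i | b i == k].
have inv_bK k : b (inv_b k) = k.
  rewrite /inv_b; case: pickP => [i /eqP //|Hnone].
  by have [i Hi] := Hsurj k (ltn_ord k); have := Hnone i; rewrite Hi eqxx.
have inv_b_inj : injective inv_b.
  by move=> k1 k2 H; apply: ord_inj; rewrite -(inv_bK k1) -(inv_bK k2) H.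
by exists (perm inv_b_inj) => k; rewrite permE -Hbd inv_bK.
Qed.

End ShiftedInjective.

Theorem mainTheorem7 (K : nat) (t1 t2 : Cplx)
  (r c : 'I_(2 * K) -> Z) (E G : 'I_(2 * K) -> nat) :
  (1 <= K)%N ->
  let M := fun i j : 'I_(2 * K) => Iint t1 t2 (c j + r i)%Z (E j) (G j) in
  ((tot_deg r c E G < 2 * Z.of_nat K ^ 2 - 3 * Z.of_nat K)%Z -> Cdet M = C0) /\
  (tot_deg r c E G = (2 * Z.of_nat K ^ 2 - 3 * Z.of_nat K)%Z -> Cdet M <> C0 ->
   exists s : 'S_(2 * K), forall k : 'I_(2 * K),
     col_deg r c E G (s k) = (Z.of_nat (nat_of_ord k) - 1)%Z).
Proof.
move=> HK M; have Hn : (0 < 2 * K)%N by rewrite muln_gt0.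
have [im Hmax] := exists_row_max r (Ordinal Hn).
have Hbound : (Z.of_nat (2 * K) * (Z.of_nat (2 * K) - 3) =
               2 * (2 * Z.of_nat K ^ 2 - 3 * Z.of_nat K))%Z by rewrite Nat2Z.inj_mul; lia.
split=> [Hlt|Htot].
- apply: NNPP => /(Cdet_Iint_neq0_degrees Hmax) [s0 [b [Hb Hdeg]]].
  have := sumZ_shifted_inj_ge Hb Hdeg; rewrite -tot_deg_perm; lia.
- move=> /(Cdet_Iint_neq0_degrees Hmax) [s0 [b [Hb Hdeg]]].
  have [|s Hs] := sumZ_shifted_inj_eq Hb Hdeg; first by rewrite -tot_deg_perm; lia.
  by exists (s * s0)%g => k; rewrite permM; exact: Hs.
Qed.
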